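(* Let $G$ be the infinite triangular grid. The code $C=\{v(i,j)\mid i\equiv 0 \pmod 2,\ j\equiv 0\pmod 2\}$ is self-locating-dominating in $G$, and therefore also solid-locating-dominating. The density of $C$ equals $1/4$, and there exists no self-locating-dominating code and no solid-locating-dominating code in $G$ with density smaller than $1/4$.
   Context: The infinite triangular grid $G=(V,E)$ has vertex set $V=\{v(i,j)\mid i,j\in\mathbb{Z}\}$ where $v(i,j)=i(1,0)+j(\tfrac12,\tfrac{\sqrt3}{2})\in\mathbb{R}^2$, and two vertices are adjacent iff their Euclidean distance is $1$. Let $V_n=\{v(i,j)\mid |i|,|j|\le n\}$; the density of a code $C\subseteq V$ is $D(C)=\limsup_{n\to\infty}|C\cap V_n|/|V_n|$. $N[v]$ is the closed neighbourhood of $v$, and for a code (nonempty subset) $C$, $I(C;v)=N[v]\cap C$. A code $C$ is self-locating-dominating if for every $u\in V\setminus C$, $I(C;u)\ne\emptyset$ and $\bigcap_{c\in I(C;u)}N[c]=\{u\}$. A code $C$ is solid-locating-dominating if for all distinct $u,v\in V\setminus C$, $I(C;u)\setminus I(C;v)\neq\emptyset$. *)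

From Stdlib Require Import ZArith Reals ClassicalDescription.
From Coquelicot Require Import Coquelicot.
Open Scope R_scope.

Definition vtx := (Z * Z)%type.

Definition vpos (p : vtx) : R * R :=
  (IZR (fst p) + IZR (snd p) / 2, IZR (snd p) * sqrt 3 / 2).

Definition edist (x y : R * R) : R :=
  sqrt ((fst x - fst y) ^ 2 + (snd x - snd y) ^ 2).

Definition adj (u v : vtx) : Prop := edist (vpos u) (vpos v) = 1.

Definition inN (v w : vtx) : Prop := w = v \/ adj v w.

Definition code := vtx -> Prop.

Definition inI (C : code) (u c : vtx) : Prop := inN u c /\ C c.

Definition self_locating_dominating (C : code) : Prop :=
  forall u, ~ C u ->
    (exists c, inI C u c) /\
    (forall w, (forall c, inI C u c -> inN c w) <-> w = u).

Definition solid_locating_dominating (C : code) : Prop :=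
  forall u v, ~ C u -> ~ C v -> u <> v ->
    exists c, inI C u c /\ ~ inI C v c.

(* |C ∩ V_n| with V_n = {v(i,j) | |i|,|j| <= n} *)
Definition ind (P : Prop) : R := if excluded_middle_informative P then 1 else 0.

Definition count_in_Vn (C : code) (n : nat) : R :=
  sum_f_R0 (fun a =>
    sum_f_R0 (fun b =>
      ind (C (Z.of_nat a - Z.of_nat n, Z.of_nat b - Z.of_nat n)%Z)) (2 * n))
    (2 * n).

Definition card_Vn (n : nat) : R := (2 * INR n + 1) ^ 2.

Definition density (C : code) : Rbar :=
  LimSup_seq (fun n => count_in_Vn C n / card_Vn n).

Definition C_even : code :=
  fun p => Z.even (fst p) = true /\ Z.even (snd p) = true.

(* Lower bound, by discharging: every vertex u sends 1 to each codeword of N[u] if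
   N[u] contains at least two codewords, and 2 otherwise.  A solid-locating-dominating
   code is dominating, so every vertex sends at least 2.  A codeword c receives at
   most 8: if some w <> c in N[c] sees no codeword but c, then separating w from the
   other vertices v of N[c] forces each such v into the code, so w is the only vertex
   of N[c] sending 2.  As the charge sent from V_n lands in V_(n+1), this gives
   2 |V_n| <= 8 |C ∩ V_(n+1)|.
   For the even code, each non-codeword has two codewords in its neighbourhood whose
   closed neighbourhoods meet only in it, and |C ∩ V_n| = (n + [n even])^2. *)

From Pilot Require Import Defs.
From Stdlib Require Import ZArith Reals Lra Lia List FinFun Classical ClassicalDescription.
From Coquelicot Require Import Coquelicot.
Import ListNotations.
Open Scope R_scope.


(** * Finite sums over lists *)

Fixpoint sumR {A} (l : list A) (f : A -> R) : R :=
  match l with [] => 0 | x :: l' => f x + sumR l' f end.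

Lemma sumR_app {A} (l1 l2 : list A) f : sumR (l1 ++ l2) f = sumR l1 f + sumR l2 f.
Proof. induction l1; cbn; [ring|]. rewrite IHl1; ring. Qed.

Lemma sumR_map {A B} (g : B -> A) l f : sumR (map g l) f = sumR l (fun x => f (g x)).
Proof. induction l; cbn; congruence. Qed.

Lemma sumR_ext {A} (l : list A) f g :
  (forall x, In x l -> f x = g x) -> sumR l f = sumR l g.
Proof. induction l; intros H; cbn in *; [reflexivity|]. rewrite H, IHl; auto. Qed.

Lemma sumR_le {A} (l : list A) f g :
  (forall x, In x l -> f x <= g x) -> sumR l f <= sumR l g.
Proof.
  induction l; intros H; cbn in *; [lra|].
  apply Rplus_le_compat; auto.
Qed.

Lemma sumR_nonneg {A} (l : list A) f : (forall x, 0 <= f x) -> 0 <= sumR l f.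
Proof. intros H. induction l; cbn; [lra|]. specialize (H a). lra. Qed.

Lemma sumR_plus {A} (l : list A) f g :
  sumR l (fun x => f x + g x) = sumR l f + sumR l g.
Proof. induction l; cbn; [ring|]. rewrite IHl; ring. Qed.

Lemma sumR_scal {A} (l : list A) c f : sumR l (fun x => c * f x) = c * sumR l f.
Proof. induction l; cbn; [ring|]. rewrite IHl; ring. Qed.

Lemma sumR_const {A} (l : list A) c : sumR l (fun _ => c) = INR (length l) * c.
Proof. induction l; cbn [sumR length]; [simpl; ring|]. rewrite IHl, S_INR; ring. Qed.

Lemma sumR_swap {A B} (l1 : list A) (l2 : list B) f :
  sumR l1 (fun x => sumR l2 (fun y => f x y)) = sumR l2 (fun y => sumR l1 (fun x => f x y)).
Proof.
  induction l1; cbn.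
  - rewrite sumR_const; ring.
  - rewrite IHl1, <- sumR_plus. reflexivity.
Qed.

Lemma sumR_list_prod {A B} (l1 : list A) (l2 : list B) f :
  sumR (list_prod l1 l2) f = sumR l1 (fun x => sumR l2 (fun y => f (x, y))).
Proof. induction l1; cbn; [reflexivity|]. rewrite sumR_app, sumR_map, IHl1. reflexivity. Qed.

Lemma sumR_list_prod_mul {A B} (l1 : list A) (l2 : list B) f g :
  sumR (list_prod l1 l2) (fun p => f (fst p) * g (snd p)) = sumR l1 f * sumR l2 g.
Proof.
  rewrite sumR_list_prod; cbn [fst snd].
  rewrite (sumR_ext _ _ (fun x => sumR l2 g * f x)).
  - rewrite sumR_scal; ring.
  - intros x _. rewrite sumR_scal; ring.
Qed.

Lemma sumR_incl_le {A} (l1 l2 : list A) f :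
  NoDup l1 -> incl l1 l2 -> (forall x, 0 <= f x) -> sumR l1 f <= sumR l2 f.
Proof.
  intros Hnd; revert l2; induction Hnd as [|x l1 Hx _ IH]; intros l2 Hincl Hf.
  - apply sumR_nonneg, Hf.
  - destruct (in_split x l2 (Hincl x (in_eq x l1))) as (l & l' & ->).
    assert (Hrest : sumR l1 f <= sumR (l ++ l') f).
    { apply IH; [|exact Hf]. intros y Hy.
      specialize (Hincl y (in_cons x y l1 Hy)).
      rewrite in_app_iff in *; cbn in Hincl.
      destruct Hincl as [H|[<-|H]]; tauto. }
    rewrite sumR_app in *; cbn. lra.
Qed.

Lemma sumR_one_two_le {A} (l : list A) f :
  NoDup l -> (forall x, In x l -> f x = 1 \/ f x = 2) ->
  (forall x y, In x l -> In y l -> f x = 2 -> f y = 2 -> x = y) ->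
  sumR l f <= INR (length l) + 1.
Proof.
  induction 1 as [|x l Hx Hnd IH]; intros H12 Hunique; cbn [sumR length]; [simpl; lra|].
  rewrite S_INR.
  destruct (H12 x (in_eq x l)) as [Hf|Hf].
  - assert (sumR l f <= INR (length l) + 1); [|lra].
    apply IH; intros; [apply H12|apply Hunique]; auto using in_cons.
  - assert (sumR l f <= sumR l (fun _ => 1)); [|rewrite sumR_const in *; lra].
    apply sumR_le; intros y Hy.
    destruct (H12 y (in_cons x y l Hy)) as [E|E]; [lra|].
    exfalso. apply Hx. rewrite (Hunique x y); auto using in_eq, in_cons.
Qed.

Lemma NoDup_list_prod {A B} (l1 : list A) (l2 : list B) :
  NoDup l1 -> NoDup l2 -> NoDup (list_prod l1 l2).
Proof.
  intros H1 H2. induction H1 as [|x l1 Hx _ IH]; cbn; [constructor|].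
  apply NoDup_app; [|exact IH|].
  - apply Injective_map_NoDup; [|exact H2]. intros y y' E. now injection E.
  - intros [a b] Hab Hin. apply in_map_iff in Hab as (y & E & _). injection E as <- _.
    apply in_prod_iff in Hin as [? _]. contradiction.
Qed.

Lemma sum_f_R0_sumR f m : sum_f_R0 f m = sumR (seq 0 (S m)) f.
Proof.
  induction m; cbn [sum_f_R0]; [cbn; ring|].
  rewrite IHm, (seq_S (S m)), sumR_app. cbn. ring.
Qed.

Lemma sumR_seq_alternating (g : nat -> R) m :
  (forall k, g k + g (S k) = 1) -> sumR (seq 0 (2 * m)) g = INR m.
Proof.
  intros Hg. induction m; [reflexivity|].
  replace (2 * S m)%nat with (2 * m + 2)%nat by lia.
  rewrite seq_app, sumR_app, IHm, S_INR; cbn [seq sumR Nat.add].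
  specialize (Hg (2 * m)%nat). lra.
Qed.

Lemma ind_true (P : Prop) : P -> Defs.ind P = 1.
Proof. intros H. unfold Defs.ind. destruct (excluded_middle_informative P); tauto. Qed.

Lemma ind_false (P : Prop) : ~ P -> Defs.ind P = 0.
Proof. intros H. unfold Defs.ind. destruct (excluded_middle_informative P); tauto. Qed.

Lemma ind_nonneg (P : Prop) : 0 <= Defs.ind P.
Proof. unfold Defs.ind. destruct (excluded_middle_informative P); lra. Qed.

Lemma ind_bool b : Defs.ind (b = true) = if b then 1 else 0.
Proof. destruct b; [apply ind_true; reflexivity|apply ind_false; discriminate]. Qed.

Lemma ind_and (P Q : Prop) : Defs.ind (P /\ Q) = Defs.ind P * Defs.ind Q.
Proof.
  destruct (classic P) as [HP|HP]; [destruct (classic Q) as [HQ|HQ]|].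
  - rewrite !ind_true by tauto. ring.
  - rewrite (ind_false (P /\ Q)), (ind_false Q) by tauto. ring.
  - rewrite (ind_false (P /\ Q)), (ind_false P) by tauto. ring.
Qed.

(** * The grid *)

Definition vadd (u d : vtx) : vtx := (fst u + fst d, snd u + snd d)%Z.
Definition vsub (u d : vtx) : vtx := (fst u - fst d, snd u - snd d)%Z.

Lemma vsub_vadd u d : vsub (vadd u d) d = u.
Proof. destruct u, d; unfold vadd, vsub; cbn; f_equal; ring. Qed.

Lemma vadd_vsub u c : vadd u (vsub c u) = c.
Proof. destruct u, c; unfold vadd, vsub; cbn; f_equal; ring. Qed.

Lemma vsub_vsub c d : vsub c (vsub c d) = d.
Proof. destruct c, d; unfold vsub; cbn; f_equal; ring. Qed.

Lemma vsub_inj_l u c1 c2 : vsub c1 u = vsub c2 u -> c1 = c2.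
Proof. intros E. rewrite <- (vadd_vsub u c1), <- (vadd_vsub u c2), E. reflexivity. Qed.

Lemma vsub_inj_r c d1 d2 : vsub c d1 = vsub c d2 -> d1 = d2.
Proof. intros E. rewrite <- (vsub_vsub c d1), <- (vsub_vsub c d2), E. reflexivity. Qed.

(* N[v] - v in (i,j)-coordinates: the step (a,b) has length sqrt (a^2 + ab + b^2). *)
Definition nbr_offsets : list vtx :=
  [(0, 0); (1, 0); (-1, 0); (0, 1); (0, -1); (1, -1); (-1, 1)]%Z.

Lemma In_nbr_offsets a b :
  In (a, b) nbr_offsets <-> (a = 0 /\ b = 0 \/ a * a + a * b + b * b = 1)%Z.
Proof.
  cbn; rewrite !pair_equal_spec; split; [lia|].
  intros [H|H]; [lia|].
  assert (Ha : (a = -1 \/ a = 0 \/ a = 1)%Z) by nia.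
  assert (Hb : (b = -1 \/ b = 0 \/ b = 1)%Z) by nia.
  destruct Ha as [-> | [-> | ->]]; destruct Hb as [-> | [-> | ->]]; lia.
Qed.

Lemma adj_iff x y x' y' :
  adj (x, y) (x', y') <->
  ((x' - x) * (x' - x) + (x' - x) * (y' - y) + (y' - y) * (y' - y) = 1)%Z.
Proof.
  unfold adj, edist, vpos; cbn [fst snd].
  set (q := ((x' - x) * (x' - x) + (x' - x) * (y' - y) + (y' - y) * (y' - y))%Z).
  assert (Hsq : (IZR x + IZR y / 2 - (IZR x' + IZR y' / 2)) ^ 2
                + (IZR y * sqrt 3 / 2 - IZR y' * sqrt 3 / 2) ^ 2 = IZR q).
  { assert (H3 : sqrt 3 * sqrt 3 = 3) by (apply sqrt_sqrt; lra).
    unfold q; rewrite !plus_IZR, !mult_IZR, !minus_IZR.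
    replace ((IZR y * sqrt 3 / 2 - IZR y' * sqrt 3 / 2) ^ 2)
      with ((IZR y - IZR y') ^ 2 * (sqrt 3 * sqrt 3) / 4) by field.
    rewrite H3; field. }
  rewrite Hsq; split.
  - intros H. apply eq_IZR. rewrite <- sqrt_1 in H.
    assert (0 <= IZR q)
      by (rewrite <- Hsq; apply Rplus_le_le_0_compat; apply pow2_ge_0).
    apply sqrt_inj in H; lra.
  - intros ->. apply sqrt_1.
Qed.

Lemma inN_iff_offset u w : inN u w <-> In (vsub w u) nbr_offsets.
Proof.
  destruct u as [x y], w as [x' y']; unfold inN, vsub; cbn [fst snd].
  rewrite adj_iff, In_nbr_offsets; split.
  - intros [E|E]; [injection E; lia|auto].
  - intros [[E1 E2]|E]; [left; f_equal; lia|auto].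
Qed.

Lemma inN_refl u : inN u u.
Proof. now left. Qed.

Lemma inN_sym u w : inN u w -> inN w u.
Proof.
  destruct u as [x y], w as [x' y']; rewrite !inN_iff_offset; unfold vsub; cbn [fst snd].
  rewrite !In_nbr_offsets; nia.
Qed.

Lemma inN_iff x y x' y' :
  inN (x, y) (x', y') <->
  (let a := x' - x in let b := y' - y in
   a = 0 /\ b = 0 \/ a = 1 /\ b = 0 \/ a = -1 /\ b = 0 \/ a = 0 /\ b = 1 \/
   a = 0 /\ b = -1 \/ a = 1 /\ b = -1 \/ a = -1 /\ b = 1)%Z.
Proof.
  rewrite inN_iff_offset; unfold vsub, nbr_offsets, vtx; cbn [fst snd In].
  rewrite !pair_equal_spec; cbv zeta; lia.
Qed.

Ltac grid_lia := rewrite ?inN_iff in *; cbv zeta in *; lia.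

Lemma self_locating_solid C : self_locating_dominating C -> solid_locating_dominating C.
Proof.
  intros HS u v Hu Hv Huv.
  destruct (HS u Hu) as [_ Hsep].
  assert (Hv_out : ~ (forall c, inI C u c -> inN c v)).
  { intros Hall. apply Huv. symmetry. now apply Hsep. }
  apply not_all_ex_not in Hv_out as [c Hc].
  exists c. apply imply_to_and in Hc as [Hcu Hcv].
  split; [exact Hcu|]. intros [Hvc _]. exact (Hcv (inN_sym _ _ Hvc)).
Qed.

Lemma self_locating_at_of_pair C u c1 c2 :
  inI C u c1 -> inI C u c2 -> (forall w, inN c1 w -> inN c2 w -> w = u) ->
  (exists c, inI C u c) /\ (forall w, (forall c, inI C u c -> inN c w) <-> w = u).
Proof.
  intros H1 H2 Hmeet. split; [now exists c1|].
  intros w; split.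
  - intros Hall. apply Hmeet; apply Hall; assumption.
  - intros -> c [Huc _]. exact (inN_sym _ _ Huc).
Qed.

Lemma C_even_double k l : C_even (2 * k, 2 * l)%Z.
Proof. split; apply Z.even_mul. Qed.

Lemma C_even_self_locating : self_locating_dominating C_even.
Proof.
  intros [i j] Hu.
  destruct (Z.Even_or_Odd i) as [[k ->]|[k ->]];
  destruct (Z.Even_or_Odd j) as [[l ->]|[l ->]].
  - exfalso. apply Hu, C_even_double.
  - apply (self_locating_at_of_pair _ _ (2 * k, 2 * l) (2 * k, 2 * (l + 1)))%Z;
      [split; [grid_lia|apply C_even_double] ..|intros [w1 w2] ? ?; f_equal; grid_lia].
  - apply (self_locating_at_of_pair _ _ (2 * k, 2 * l) (2 * (k + 1), 2 * l))%Z;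
      [split; [grid_lia|apply C_even_double] ..|intros [w1 w2] ? ?; f_equal; grid_lia].
  - apply (self_locating_at_of_pair _ _ (2 * (k + 1), 2 * l) (2 * k, 2 * (l + 1)))%Z;
      [split; [grid_lia|apply C_even_double] ..|intros [w1 w2] ? ?; f_equal; grid_lia].
Qed.

Definition zrange (n : nat) : list Z :=
  map (fun k => Z.of_nat k - Z.of_nat n)%Z (seq 0 (S (2 * n))).

Definition box (n : nat) : list vtx := list_prod (zrange n) (zrange n).

Lemma In_zrange n z : In z (zrange n) <-> (- Z.of_nat n <= z <= Z.of_nat n)%Z.
Proof.
  unfold zrange; rewrite in_map_iff; split.
  - intros (k & <- & Hk). apply in_seq in Hk. lia.
  - intros Hz. exists (Z.to_nat (z + Z.of_nat n)). rewrite in_seq. lia.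
Qed.

Lemma NoDup_box n : NoDup (box n).
Proof.
  apply NoDup_list_prod;
    (apply Injective_map_NoDup; [intros k k' E; lia|apply seq_NoDup]).
Qed.

Lemma length_box n : INR (length (box n)) = card_Vn n.
Proof.
  unfold box, zrange, card_Vn, vtx.
  rewrite length_prod, length_map, length_seq, mult_INR, S_INR, mult_INR. cbn. ring.
Qed.

Lemma count_in_Vn_box C n : count_in_Vn C n = sumR (box n) (fun p => Defs.ind (C p)).
Proof.
  unfold count_in_Vn, box, zrange, vtx.
  rewrite sumR_list_prod, sumR_map, sum_f_R0_sumR.
  apply sumR_ext; intros a _.
  rewrite sumR_map, sum_f_R0_sumR. reflexivity.
Qed.

Lemma nbr_offsets_bounded a b :
  In (a, b) nbr_offsets -> (-1 <= a <= 1 /\ -1 <= b <= 1)%Z.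
Proof. unfold nbr_offsets, vtx; cbn [In]; rewrite !pair_equal_spec; lia. Qed.

Lemma incl_box_shift n d :
  In d nbr_offsets -> incl (map (fun u => vadd u d) (box n)) (box (S n)).
Proof.
  destruct d as [a b]; intros Hd c Hc.
  apply nbr_offsets_bounded in Hd.
  apply in_map_iff in Hc as ([i j] & <- & Hij).
  apply in_prod_iff in Hij as [Hi Hj]; apply in_prod_iff; cbn [fst snd].
  rewrite !In_zrange in *. lia.
Qed.

Lemma NoDup_box_shift n d : NoDup (map (fun u => vadd u d) (box n)).
Proof.
  apply Injective_map_NoDup; [|apply NoDup_box].
  intros u u' E. now rewrite <- (vsub_vadd u d), E, vsub_vadd.
Qed.

Lemma sum_box_nbrs_le n (G : vtx -> vtx -> R) :
  (forall u c, 0 <= G u c) ->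
  sumR (box n) (fun u => sumR nbr_offsets (fun d => G u (vadd u d))) <=
  sumR (box (S n)) (fun c => sumR nbr_offsets (fun d => G (vsub c d) c)).
Proof.
  intros HG. rewrite !(sumR_swap (box _)).
  apply sumR_le; intros d Hd.
  transitivity (sumR (map (fun u => vadd u d) (box n)) (fun c => G (vsub c d) c)).
  - right. rewrite sumR_map. apply sumR_ext; intros u _. now rewrite vsub_vadd.
  - apply sumR_incl_le; auto using NoDup_box_shift, incl_box_shift.
Qed.

(** * Discharging *)

Lemma solid_locating_dominates C u :
  solid_locating_dominating C -> exists c, inI C u c.
Proof.
  intros HS. destruct (classic (C u)) as [Hu|Hu]; [exists u; split; auto using inN_refl|].
  set (v := vadd u (1, 0)%Z).
  assert (Huv : inN u v) by (destruct u; unfold v, vadd; cbn; grid_lia).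
  destruct (classic (C v)) as [Hv|Hv]; [now exists v|].
  assert (Hne : u <> v) by (destruct u; unfold v, vadd; cbn; intros E; injection E; lia).
  destruct (HS u v Hu Hv Hne) as (c & Hc & _). now exists c.
Qed.

Definition two_codewords (C : code) (u : vtx) : Prop :=
  exists c1 c2, c1 <> c2 /\ inI C u c1 /\ inI C u c2.

Definition weight (C : code) (u : vtx) : R :=
  if excluded_middle_informative (two_codewords C u) then 1 else 2.

Lemma weight_cases C u :
  weight C u = 1 /\ two_codewords C u \/ weight C u = 2 /\ ~ two_codewords C u.
Proof. unfold weight. destruct (excluded_middle_informative _); auto. Qed.

Lemma weight_codeword_nbr C u w :
  C u -> C w -> u <> w -> inN u w -> weight C u = 1.
Proof.
  intros Hu Hw Huw Hn. destruct (weight_cases C u) as [[]|[_ Hnot]]; [assumption|].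
  exfalso. apply Hnot. exists u, w. split; [exact Huw|split; split; auto using inN_refl].
Qed.

Lemma weight2_forces_codewords C c w v :
  solid_locating_dominating C -> C c -> inN c w -> w <> c -> weight C w = 2 ->
  inN c v -> v <> w -> C v.
Proof.
  intros HS Hc Hcw Hwc Hw Hcv Hvw.
  assert (Hnot : ~ two_codewords C w) by (destruct (weight_cases C w); intuition lra).
  assert (HwC : ~ C w).
  { intros HwC. apply Hnot. exists w, c.
    split; [exact Hwc|split; split; auto using inN_refl, inN_sym]. }
  apply NNPP; intros HvC.
  destruct (HS w v HwC HvC (not_eq_sym Hvw)) as (e & He & Hev).
  destruct (classic (e = c)) as [->|Hec].
  - apply Hev. split; [exact (inN_sym _ _ Hcv)|exact Hc].
  - apply Hnot. exists e, c. split; [exact Hec|split; [exact He|split; auto using inN_sym]].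
Qed.

Lemma exists_other_nbr c u : exists v, inN c v /\ v <> c /\ v <> u.
Proof.
  destruct c as [x y].
  destruct (classic (u = (x + 1, y)%Z)) as [->|Hu].
  - exists (x - 1, y)%Z. split; [grid_lia|split; intros E; injection E; lia].
  - exists (x + 1, y)%Z.
    split; [grid_lia|split; [intros E; injection E; lia|exact (not_eq_sym Hu)]].
Qed.

Lemma weight2_closed_nbr_unique C c u v :
  solid_locating_dominating C -> C c -> inN c u -> inN c v ->
  weight C u = 2 -> weight C v = 2 -> u = v.
Proof.
  intros HS Hc Hu Hv Hwu Hwv.
  assert (Hlight : forall u v, inN c u -> inN c v -> u <> c -> u <> v ->
                               weight C u = 2 -> weight C v = 1).
  { intros u' v' Hu' Hv' Hu'c Hu'v' Hw.
    assert (Hv'C : C v') by (apply (weight2_forces_codewords C c u' v'); auto).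
    destruct (classic (v' = c)) as [->|Hv'c].
    - destruct (exists_other_nbr c u') as (x & Hx & Hxc & Hxu).
      apply (weight_codeword_nbr C c x); auto.
      apply (weight2_forces_codewords C c u' x); auto.
    - apply (weight_codeword_nbr C v' c); auto using inN_sym. }
  destruct (classic (u = v)) as [|Huv]; [assumption|exfalso].
  destruct (classic (u = c)) as [->|Huc].
  - assert (weight C c = 1) by (apply (Hlight v c); auto using inN_refl). lra.
  - assert (weight C v = 1) by (apply (Hlight u v); auto). lra.
Qed.

Lemma weight_sum_at_codeword C c :
  solid_locating_dominating C -> C c ->
  sumR nbr_offsets (fun d => weight C (vsub c d)) <= 8.
Proof.
  intros HS Hc.
  assert (Hin : forall d, In d nbr_offsets -> inN c (vsub c d)).
  { intros d Hd. apply inN_sym. rewrite inN_iff_offset, vsub_vsub. exact Hd. }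
  replace 8 with (INR (length nbr_offsets) + 1) by (cbn; ring).
  apply sumR_one_two_le.
  - unfold nbr_offsets; repeat constructor; cbn; intuition congruence.
  - intros d _. destruct (weight_cases C (vsub c d)) as [[-> _]|[-> _]]; auto.
  - intros d d' Hd Hd' H H'. apply (vsub_inj_r c).
    apply (weight2_closed_nbr_unique C c); auto.
Qed.

Definition codeword_count (C : code) (u : vtx) : R :=
  sumR nbr_offsets (fun d => Defs.ind (C (vadd u d))).

Lemma codeword_count_ge C u (cs : list vtx) :
  NoDup cs -> (forall c, In c cs -> inI C u c) -> INR (length cs) <= codeword_count C u.
Proof.
  intros Hnd Hcs. unfold codeword_count.
  apply Rle_trans with (sumR (map (fun c => vsub c u) cs) (fun d => Defs.ind (C (vadd u d)))).
  - rewrite sumR_map, <- (Rmult_1_r (INR _)), <- sumR_const.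
    right. apply sumR_ext; intros c Hc. rewrite vadd_vsub, ind_true; [reflexivity|].
    apply Hcs, Hc.
  - apply sumR_incl_le; [| |intros; apply ind_nonneg].
    + apply Injective_map_NoDup; [intros c c'; apply vsub_inj_l|exact Hnd].
    + intros d Hd. apply in_map_iff in Hd as (c & <- & Hc).
      apply inN_iff_offset, Hcs, Hc.
Qed.

Lemma weight_mul_codeword_count C u :
  solid_locating_dominating C -> 2 <= weight C u * codeword_count C u.
Proof.
  intros HS.
  destruct (weight_cases C u) as [[-> (c1 & c2 & Hne & H1 & H2)]|[-> _]].
  - pose proof (codeword_count_ge C u [c1; c2]) as Hge. cbn in Hge.
    assert (1 + 1 <= codeword_count C u); [|lra].
    apply Hge; [repeat constructor; cbn; intuition congruence|].
    intros c [<-|[<-|[]]]; assumption.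
  - destruct (solid_locating_dominates C u HS) as [c Hc].
    pose proof (codeword_count_ge C u [c]) as Hge. cbn in Hge.
    assert (1 <= codeword_count C u); [|lra].
    apply Hge; [repeat constructor; cbn; tauto|].
    intros c' [<-|[]]; assumption.
Qed.

Lemma solid_count_lower_bound C n :
  solid_locating_dominating C -> 2 * card_Vn n <= 8 * count_in_Vn C (S n).
Proof.
  intros HS.
  set (G := fun u c => weight C u * Defs.ind (C c)).
  assert (HG : forall u c, 0 <= G u c).
  { intros u c. apply Rmult_le_pos; [|apply ind_nonneg].
    destruct (weight_cases C u) as [[-> _]|[-> _]]; lra. }
  rewrite <- length_box, count_in_Vn_box, <- sumR_scal.
  replace (2 * INR (length (box n))) with (sumR (box n) (fun _ => 2))
    by (rewrite sumR_const; ring).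
  apply Rle_trans with (sumR (box n) (fun u => sumR nbr_offsets (fun d => G u (vadd u d)))).
  { apply sumR_le; intros u _. unfold G. rewrite sumR_scal.
    apply weight_mul_codeword_count, HS. }
  apply Rle_trans with (1 := sum_box_nbrs_le n G HG).
  apply sumR_le; intros c _. unfold G.
  rewrite (sumR_ext _ _ (fun d => Defs.ind (C c) * weight C (vsub c d))) by (intros; ring).
  rewrite sumR_scal.
  destruct (classic (C c)) as [Hc|Hc].
  - rewrite ind_true by exact Hc. pose proof (weight_sum_at_codeword C c HS Hc). lra.
  - rewrite ind_false by exact Hc. lra.
Qed.

(** * Density *)

Definition even_count (n : nat) : R := sumR (zrange n) (fun i => Defs.ind (Z.even i = true)).

Lemma even_count_eq n : even_count n = INR n + Defs.ind (Z.even (Z.of_nat n) = true).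
Proof.
  unfold even_count, zrange. rewrite sumR_map.
  replace (S (2 * n)) with (2 * n + 1)%nat by lia.
  rewrite seq_app, sumR_app, sumR_seq_alternating.
  - cbn [seq sumR Nat.add].
    replace (Z.of_nat (2 * n) - Z.of_nat n)%Z with (Z.of_nat n) by lia. ring.
  - intros k. rewrite !ind_bool, Nat2Z.inj_succ.
    replace (Z.succ (Z.of_nat k) - Z.of_nat n)%Z with (Z.succ (Z.of_nat k - Z.of_nat n)) by lia.
    rewrite Z.even_succ, <- Z.negb_even.
    destruct (Z.even (Z.of_nat k - Z.of_nat n)); cbn; ring.
Qed.

Lemma count_C_even n : count_in_Vn C_even n = even_count n ^ 2.
Proof.
  rewrite count_in_Vn_box. unfold box, even_count, vtx.
  set (f := fun i => Defs.ind (Z.even i = true)).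
  transitivity (sumR (zrange n) f * sumR (zrange n) f); [|ring].
  rewrite <- sumR_list_prod_mul.
  apply sumR_ext; intros [i j] _. unfold C_even. rewrite ind_and. reflexivity.
Qed.

Lemma is_lim_seq_square_ratio b :
  is_lim_seq (fun n => (INR n + b) ^ 2 / (2 * INR n + 1) ^ 2) (1 / 4).
Proof.
  assert (Hinf : is_lim_seq (fun n => 2 * INR n + 1) p_infty).
  { apply is_lim_seq_le_p_loc with (u := INR); [|apply is_lim_seq_INR].
    exists 0%nat. intros n _. pose proof (pos_INR n). lra. }
  assert (Hinv : is_lim_seq (fun n => / (2 * INR n + 1)) 0).
  { apply (is_lim_seq_inv _ p_infty) in Hinf; [exact Hinf|discriminate]. }
  assert (Hhalf : is_lim_seq (fun n => 1 / 2 + (b - 1 / 2) * / (2 * INR n + 1))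
                    (1 / 2 + (b - 1 / 2) * 0)).
  { apply is_lim_seq_plus'; [apply is_lim_seq_const|].
    exact (is_lim_seq_scal_l _ (b - 1 / 2) 0 Hinv). }
  pose proof (is_lim_seq_mult' _ _ _ _ Hhalf Hhalf) as Hsq.
  replace ((1 / 2 + (b - 1 / 2) * 0) * (1 / 2 + (b - 1 / 2) * 0)) with (1 / 4) in Hsq
    by field.
  revert Hsq. apply is_lim_seq_ext. intros n.
  pose proof (pos_INR n). field. lra.
Qed.

Lemma density_C_even : density C_even = Finite (1 / 4).
Proof.
  unfold density. apply is_LimSup_seq_unique, is_lim_LimSup_seq.
  apply is_lim_seq_le_le with
      (u := fun n => (INR n + 0) ^ 2 / (2 * INR n + 1) ^ 2)
      (w := fun n => (INR n + 1) ^ 2 / (2 * INR n + 1) ^ 2);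
    [|apply is_lim_seq_square_ratio ..].
  intros n. rewrite count_C_even, even_count_eq, ind_bool. unfold card_Vn.
  pose proof (pos_INR n).
  assert (0 < / (2 * INR n + 1) ^ 2) by (apply Rinv_0_lt_compat; nra).
  unfold Rdiv. destruct (Z.even _); split; apply Rmult_le_compat_r; nra.
Qed.

Lemma solid_density_ge C :
  solid_locating_dominating C -> Rbar_le (Finite (1 / 4)) (density C).
Proof.
  intros HS. unfold density.
  rewrite <- (is_LimSup_seq_unique _ _ (is_lim_LimSup_seq _ _
                (is_lim_seq_square_ratio (- (1 / 2))))).
  apply LimSup_le. exists 1%nat. intros n Hn.
  destruct n as [|m]; [lia|].
  pose proof (solid_count_lower_bound C m HS) as Hcount. unfold card_Vn in *.
  rewrite S_INR in *. pose proof (pos_INR m).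
  replace ((INR m + 1 + - (1 / 2)) ^ 2 / (2 * (INR m + 1) + 1) ^ 2)
    with ((2 * INR m + 1) ^ 2 / 4 / (2 * (INR m + 1) + 1) ^ 2) by (field; lra).
  unfold Rdiv. apply Rmult_le_compat_r; [apply Rlt_le, Rinv_0_lt_compat; nra|lra].
Qed.

Theorem theorem7 :
  self_locating_dominating C_even /\
  solid_locating_dominating C_even /\
  density C_even = Finite (1 / 4) /\
  (forall C : code, (exists c, C c) -> self_locating_dominating C ->
     Rbar_le (Finite (1 / 4)) (density C)) /\
  (forall C : code, (exists c, C c) -> solid_locating_dominating C ->
     Rbar_le (Finite (1 / 4)) (density C)).
Proof.
  split; [|split; [|split; [|split]]].
  - exact C_even_self_locating.
  - exact (self_locating_solid _ C_even_self_locating).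
  - exact density_C_even.
  - intros C _ HS. exact (solid_density_ge C (self_locating_solid C HS)).
  - intros C _ HS. exact (solid_density_ge C HS).
Qed.
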